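(* Let $(\alpha,\beta)=(\alpha_0,\beta_0)\in\Delta_K$, $(\alpha_n,\beta_n)=T^n(\alpha,\beta)$, and $n\in\mathbb{Z}_{\ge0}$. Write $\varepsilon(\alpha_n,\beta_n)=(i',j')$ and let $k\in\{0,1,2\}$ be the unique element with $k\ne i'$, $k\ne j'$. Then $\varepsilon(\alpha_{n+1},\beta_{n+1})\neq(i',k)$ and $\varepsilon(\alpha_{n+1},\beta_{n+1})\neq(k,i')$. (Equivalently, the following 12 two-letter words never occur as $\varepsilon(\alpha_n,\beta_n)\varepsilon(\alpha_{n+1},\beta_{n+1})$: $(1,2)$ followed by $(0,1)$ or $(1,0)$; $(2,1)$ followed by $(0,2)$ or $(2,0)$; $(0,1)$ followed by $(0,2)$ or $(2,0)$; $(1,0)$ followed by $(1,2)$ or $(2,1)$; $(0,2)$ followed by $(0,1)$ or $(1,0)$; $(2,0)$ followed by $(1,2)$ or $(2,1)$.)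
   Context: Let $K\subset\mathbb{R}$ be a real cubic number field, $N=N_{K/\mathbb{Q}}$ its norm. Fix $r=p/q$ with $p,q$ positive coprime integers and $3\nmid p$. Let $\Delta_K=\{(\alpha,\beta)\in K^2:\ 1,\alpha,\beta \text{ linearly independent over }\mathbb{Q},\ \alpha,\beta>0,\ \alpha+\beta<1\}$ and $Ind=\{(i,j): i,j\in\{0,1,2\},\ i\neq j\}$. Let $\Delta=\{(x,y)\in\mathbb{R}^2: x,y\ge 0,\ x+y\le 1\}$ and $\triangle(1,2)=\{(x,y)\in\Delta: x\ge y\}$, $\triangle(2,1)=\{x\le y\}$, $\triangle(0,1)=\{2x+y-1\le 0\}$, $\triangle(1,0)=\{2x+y-1\ge 0\}$, $\triangle(0,2)=\{x+2y-1\le0\}$, $\triangle(2,0)=\{x+2y-1\ge 0\}$ (all subsets of $\Delta$). Maps $T_{(i,j)}:\triangle(i,j)\to\Delta$: $T_{(1,2)}(x,y)=(\frac{x-y}{1-y},\frac{y}{1-y})$, $T_{(2,1)}(x,y)=(\frac{x}{1-x},\frac{y-x}{1-x})$, $T_{(0,1)}(x,y)=(\frac{x}{1-x},\frac{y}{1-x})$, $T_{(1,0)}(x,y)=(\frac{2x+y-1}{x+y},\frac{y}{x+y})$, $T_{(0,2)}(x,y)=(\frac{x}{1-y},\frac{y}{1-y})$, $T_{(2,0)}(x,y)=(\frac{x}{x+y},\frac{x+2y-1}{x+y})$. For $(\alpha,\beta)\in\Delta_K$ put $\gamma=1-\alpha-\beta$ and $v_{\{1,2\}}=\frac{\alpha^r\beta^r}{|N(\alpha)N(\beta)|}$,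 $v_{\{0,1\}}=\frac{\alpha^r\gamma^r}{|N(\alpha)N(\gamma)|}$, $v_{\{0,2\}}=\frac{\beta^r\gamma^r}{|N(\beta)N(\gamma)|}$; the maximum is attained at a unique pair $\{i_0,j_0\}$. $\varepsilon(\alpha,\beta)$ is the ordered pair $(i,j)\in Ind$ with $\{i,j\}=\{i_0,j_0\}$ and $(\alpha,\beta)\in\triangle(i,j)$, and $T(\alpha,\beta)=T_{\varepsilon(\alpha,\beta)}(\alpha,\beta)$ (a map $\Delta_K\to\Delta_K$). *)

From HB Require Import structures.
From mathcomp Require Import all_boot all_order all_algebra.
From mathcomp Require Import boolp classical_sets reals exp.
Set Implicit Arguments. Unset Strict Implicit. Unset Printing Implicit Defensive.
Import Order.TTheory GRing.Theory Num.Theory.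
Local Open Scope ring_scope.

Section Defs.
Variable R : realType.

Definition qcomb (e : 'I_3 -> R) (c : 'I_3 -> rat) : R :=
  \sum_(i < 3) ratr (c i) * e i.

Definition cubic_field (K : set R) (e : 'I_3 -> R) : Prop :=
  [/\ (forall x, K x <-> exists c, x = qcomb e c),
      (forall c, qcomb e c = 0 -> forall i, c i = 0),
      K 1,
      (forall x y, K x -> K y -> K (x * y)) &
      (forall x, K x -> x != 0 -> K x^-1)].

(* coordinates of x in the basis e (chosen classically; unique when e is a basis
   and x is in the span) *)
Definition coords (e : 'I_3 -> R) (x : R) : 'I_3 -> rat :=
  match pselect (exists c, x = qcomb e c) with
  | left h => proj1_sig (cid h)
  | right _ => fun _ => 0
  end.

(* N_{K/Q}(a): determinant of the Q-linear map x |-> a x of K, in the basis e *)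
Definition normK (e : 'I_3 -> R) (a : R) : rat :=
  \det (\matrix_(i < 3, j < 3) coords e (a * e i) j).

Definition DeltaK (K : set R) (a b : R) : Prop :=
  [/\ K a /\ K b,
      (forall x y z : rat, ratr x + ratr y * a + ratr z * b = 0 ->
         [/\ x = 0, y = 0 & z = 0]),
      0 < a, 0 < b & a + b < 1].

Definition Tij (ij : nat * nat) (p : R * R) : R * R :=
  let: (x, y) := p in
  match ij with
  | (1, 2)%N => ((x - y) / (1 - y), y / (1 - y))
  | (2, 1)%N => (x / (1 - x), (y - x) / (1 - x))
  | (0, 1)%N => (x / (1 - x), y / (1 - x))
  | (1, 0)%N => ((2 * x + y - 1) / (x + y), y / (x + y))
  | (0, 2)%N => (x / (1 - y), y / (1 - y))
  | (2, 0)%N => (x / (x + y), (x + 2 * y - 1) / (x + y))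
  | _ => (x, y)
  end.

Variables (e : 'I_3 -> R) (r : R).

Definition vv (a b : R) : R :=
  powR a r * powR b r / `| ratr (normK e a * normK e b) |.

(* epsilon(alpha, beta): the unordered pair {i0,j0} maximizing v (unique by the
   paper; ties are broken arbitrarily here), then the order given by the
   triangle triangle(i,j) containing (alpha,beta) (boundaries never meet
   Delta_K). *)
Definition eps (p : R * R) : nat * nat :=
  let: (a, b) := p in
  let g := 1 - a - b in
  let v12 := vv a b in
  let v01 := vv a g in
  let v02 := vv b g in
  if (v01 <= v12) && (v02 <= v12) then
    (if b <= a then (1, 2)%N else (2, 1)%N)
  else if v02 <= v01 then
    (if 2 * a + b - 1 <= 0 then (0, 1)%N else (1, 0)%N)
  else
    (if a + 2 * b - 1 <= 0 then (0, 2)%N else (2, 0)%N).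

Definition Tmap (p : R * R) : R * R := Tij (eps p) p.

End Defs.

From HB Require Import structures.
From mathcomp Require Import all_boot all_order all_algebra.
From mathcomp Require Import boolp classical_sets reals exp.
From mathcomp Require Import ring lra.
Set Implicit Arguments. Unset Strict Implicit. Unset Printing Implicit Defensive.
Import Order.TTheory GRing.Theory Num.Theory.
Local Open Scope ring_scope.

(* Write [x_0 = gamma], [x_1 = alpha], [x_2 = beta] and [w(x) = x^r / |N(x)|], so
   that [v_{ij} = w(x_i) w(x_j)].  The weight [w] is multiplicative on positive
   elements of [K], and injective there because [3] does not divide [p].  The map
   [T_(i,j)] replaces [x_i] by [x_i - x_j] and rescales all three coordinates by
   the same factor, so it multiplies [w(x_j)] and [w(x_k)] by a common positive
   number.  When [{i, j}] is the top pair, the remaining index [k] satisfies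
   [w(x_k) < w(x_j)] (strictly, since [x_j <> x_k] by Q-independence); if the
   next top pair were [{i, k}], the same fact one step later would give the
   reverse inequality. *)

Section CubicField.
Variables (R : realType) (K : set R) (e : 'I_3 -> R).
Hypothesis cf : cubic_field K e.

Lemma qcombD c d : qcomb e c + qcomb e d = qcomb e (fun i => c i + d i).
Proof. by rewrite /qcomb -big_split; apply: eq_bigr => i _; rewrite rmorphD mulrDl. Qed.

Lemma qcombN c : - qcomb e c = qcomb e (fun i => - c i).
Proof. by rewrite /qcomb -sumrN; apply: eq_bigr => i _; rewrite rmorphN mulNr. Qed.

Lemma qcomb_inj c d : qcomb e c = qcomb e d -> c =1 d.
Proof.
case: cf => _ free _ _ _ cd i; apply/eqP; rewrite -subr_eq0; apply/eqP.
by apply: (free (fun i => c i - d i)); rewrite -qcombD -qcombN cd subrr.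
Qed.

Lemma coordsP x : K x -> x = qcomb e (coords e x).
Proof.
by case: cf => spanK _ _ _ _ /spanK x_span; rewrite /coords; case: pselect => // h; case: cid.
Qed.

Lemma coordsE x c : x = qcomb e c -> coords e x =1 c.
Proof.
case: cf => spanK _ _ _ _ xc; apply: qcomb_inj.
by rewrite -xc -coordsP //; apply/spanK; exists c.
Qed.

Lemma K1 : K 1. Proof. by case: cf. Qed.
Lemma KM x y : K x -> K y -> K (x * y). Proof. by case: cf => _ _ _ + _; apply. Qed.
Lemma KV x : K x -> x != 0 -> K x^-1. Proof. by case: cf => _ _ _ _; apply. Qed.

Lemma KD x y : K x -> K y -> K (x + y).
Proof.
case: cf => spanK _ _ _ _ /spanK[c ->] /spanK[d ->]; apply/spanK.
by exists (fun i => c i + d i); rewrite qcombD.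
Qed.

Lemma KN x : K x -> K (- x).
Proof.
by case: cf => spanK _ _ _ _ /spanK[c ->]; apply/spanK; exists (fun i => - c i); rewrite qcombN.
Qed.

Lemma KB x y : K x -> K y -> K (x - y).
Proof. by move=> Kx /KN; apply: KD. Qed.

Lemma Kbasis i : K (e i).
Proof.
case: cf => spanK _ _ _ _; apply/spanK; exists (fun j => (j == i)%:R).
rewrite /qcomb (bigD1 i) //= eqxx rmorph1 mul1r big1 ?addr0 // => j /negbTE ->.
by rewrite rmorph0 mul0r.
Qed.

(* Row [i] holds the coordinates of [a * e i]: multiplication by [a] acts on
   coordinate row vectors, hence the reversed product in [mulmx_ofM]. *)
Definition mulmx_of a := \matrix_(i < 3, j < 3) coords e (a * e i) j.

Lemma mulmx_ofE a i : K a -> a * e i = qcomb e (mulmx_of a i).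
Proof.
move=> Ka; rewrite (coordsP (KM Ka (Kbasis i))) /qcomb.
by apply: eq_bigr => j _; rewrite mxE.
Qed.

Lemma mulmx_ofM a b : K a -> K b -> mulmx_of (a * b) = mulmx_of b *m mulmx_of a.
Proof.
move=> Ka Kb; apply/matrixP => i l; rewrite [LHS]mxE mxE.
apply: (coordsE (c := fun l => \sum_j mulmx_of b i j * mulmx_of a j l)).
rewrite -mulrA (mulmx_ofE i Kb) /qcomb mulr_sumr.
under eq_bigr => j _ do rewrite mulrCA (mulmx_ofE j Ka) /qcomb mulr_sumr.
rewrite exchange_big /=; apply: eq_bigr => k _.
by rewrite rmorph_sum mulr_suml; apply: eq_bigr => j _; rewrite rmorphM mulrA.
Qed.

Lemma normKM a b : K a -> K b -> normK e (a * b) = normK e a * normK e b.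
Proof. by move=> Ka Kb; rewrite /normK -!/(mulmx_of _) mulmx_ofM // det_mulmx mulrC. Qed.

Lemma normK_rat (c : rat) : normK e (ratr c) = c ^+ 3.
Proof.
rewrite /normK -/(mulmx_of _) -det_scalar; congr (\det _); apply/matrixP => i j.
rewrite mxE; apply: (coordsE (c := fun j => (c%:M : 'M_3) i j)).
rewrite /qcomb (bigD1 i) //= mxE eqxx mulr1n big1 ?addr0 // => k /negbTE ki.
by rewrite mxE eq_sym ki mulr0n rmorph0 mul0r.
Qed.

Lemma normK1 : normK e 1 = 1.
Proof. by rewrite -(rmorph1 (ratr : rat -> R)) normK_rat expr1n. Qed.

Lemma normKX a n : K a -> normK e (a ^+ n) = normK e a ^+ n.
Proof.
move=> Ka; elim: n => [|n IHn]; first by rewrite !expr0 normK1.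
have Kan : K (a ^+ n) by elim: n {IHn} => [|n]; rewrite ?expr0 ?exprS; [exact: K1 | exact: KM].
by rewrite !exprS normKM // IHn.
Qed.

Lemma normK_neq0 a : K a -> a != 0 -> normK e a != 0.
Proof.
move=> Ka a0; apply/eqP => Na0.
have := normKM Ka (KV Ka a0); rewrite mulfV // normK1 Na0 mul0r.
by apply/eqP; rewrite oner_eq0.
Qed.

End CubicField.

Section Weight.
Variables (R : realType) (K : set R) (e : 'I_3 -> R).
Hypothesis cf : cubic_field K e.
Variable r : R.

Definition weight x := powR x r / `| ratr (normK e x) |.

Lemma vv_weight a b : vv e r a b = weight a * weight b.
Proof. by rewrite /vv /weight rmorphM normrM invfM mulrACA. Qed.

Lemma weight_gt0 x : K x -> 0 < x -> 0 < weight x.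
Proof.
move=> Kx x0; rewrite divr_gt0 ?powR_gt0 // normr_gt0 fmorph_eq0.
by rewrite (normK_neq0 cf Kx) // gt_eqF.
Qed.

Lemma weightM x y : K x -> K y -> 0 < x -> 0 < y -> weight (x * y) = weight x * weight y.
Proof.
move=> Kx Ky x0 y0; rewrite /weight (normKM cf Kx Ky) powRM ?ltW //.
by rewrite rmorphM normrM invfM mulrACA.
Qed.

End Weight.

Section WeightInjective.
Variables (R : realType) (K : set R) (e : 'I_3 -> R).
Hypothesis cf : cubic_field K e.
Variables p q : nat.
Hypotheses (p_gt0 : (0 < p)%N) (q_gt0 : (0 < q)%N) (p_not3 : ~~ (3 %| p)%N).
Local Notation weight := (weight e (p%:R / q%:R)).

(* [w(t) = 1] says [t^(p/q) = u] with [u = |N(t)|] rational, so [t^p = u^q];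
   taking norms gives [u^p = u^(3q)], and as [3] does not divide [p], [u = 1]. *)
Lemma weight_eq1 t : K t -> 0 < t -> weight t = 1 -> t = 1.
Proof.
move=> Kt t0 wt1; pose u : rat := `|normK e t|.
have u0 : 0 < u by rewrite normr_gt0 (normK_neq0 cf Kt) // gt_eqF.
have tr : powR t (p%:R / q%:R) = ratr u.
  have : weight t * ratr u = ratr u by rewrite wt1 mul1r.
  by rewrite /weight /u ratr_norm divfK // -ratr_norm fmorph_eq0 gt_eqF.
have tp : t ^+ p = ratr (u ^+ q).
  have -> : ratr (u ^+ q) = powR t (p%:R / q%:R) ^+ q :> R by rewrite tr rmorphXn.
  rewrite -[RHS]powR_mulrn ?powR_ge0 // -powRrM divfK; last by rewrite pnatr_eq0 -lt0n.
  by rewrite powR_mulrn // ltW.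
have up : u ^+ p = u ^+ (3 * q).
  have := congr1 (fun x => `|normK e x|) tp.
  rewrite /= (normKX cf _ Kt) (normK_rat cf) normrX => ->.
  by rewrite ger0_norm ?exprn_ge0 ?ltW // -exprM mulnC.
have [u1|u1] := eqVneq u 1.
  move: tp; rewrite u1 expr1n rmorph1 => /eqP; rewrite pexpr_eq1 ?ltW // -?lt0n //.
  by move/eqP.
by move: p_not3; rewrite (ieexprIn u0 u1 up) dvdn_mulr.
Qed.

Lemma weight_inj x y : K x -> K y -> 0 < x -> 0 < y -> weight x = weight y -> x = y.
Proof.
move=> Kx Ky x0 y0 wxy; have y_neq0 : y != 0 by rewrite gt_eqF.
have Kxy : K (x / y) by apply: (KM cf) => //; apply: (KV cf).
have xy0 : 0 < x / y by rewrite divr_gt0.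
suff xy1 : x / y = 1 by rewrite -(divfK y_neq0 x) xy1 mul1r.
apply: weight_eq1 => //; apply: (mulIf (x := weight y)); first by rewrite gt_eqF // (weight_gt0 cf).
by rewrite mul1r -(weightM cf) // divfK.
Qed.

End WeightInjective.

Section Simplex.
Variable R : realFieldType.
Implicit Types (pt : R * R) (x y : nat -> R).

(* The coordinates [(gamma, alpha, beta)] of a point [(alpha, beta)], indexed
   as in [Ind]; the index [2] also covers every [l >= 2]. *)
Definition bary pt (l : nat) : R :=
  match l with 0 => 1 - pt.1 - pt.2 | 1 => pt.1 | _ => pt.2 end.

Lemma bary_lt1 pt l : (forall l, (l < 3)%N -> 0 < bary pt l) -> (l < 3)%N -> bary pt l < 1.
Proof.
move=> pos; have := pos 0%N isT; have := pos 1%N isT; have := pos 2%N isT.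
by case: l => [|[|[|l]]] //= *; lra.
Qed.

Definition qfree x := forall c : nat -> rat,
  ratr (c 0%N) * x 0%N + ratr (c 1%N) * x 1%N + ratr (c 2%N) * x 2%N = 0 ->
  forall l, (l < 3)%N -> c l = 0.

Lemma qfree_ext x y : (forall l, (l < 3)%N -> x l = y l) -> qfree x -> qfree y.
Proof. by move=> xy fx c; rewrite -!xy //; apply: fx. Qed.

Lemma qfreeZ s x : s != 0 -> qfree x -> qfree (fun l => s * x l).
Proof. by move=> s0 fx c E; apply: fx; apply: (mulfI s0); rewrite mulr0 -E; ring. Qed.

Lemma qfree_transvection i j x : (i < 3)%N -> (j < 3)%N -> i != j -> qfree x ->
  qfree (fun l => x l - (l == i)%:R * x j).
Proof.
move=> i3 j3 ij fx c E; pose c' l := c l - (l == j)%:R * c i.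
have c'0 : forall l, (l < 3)%N -> c' l = 0.
  apply: fx; rewrite -{}E /c'.
  by case: i j i3 j3 ij {c'} => [|[|[|i]]] [|[|[|j]]] //= _ _ _;
    rewrite !(rmorphB, rmorphM, rmorph_nat); ring.
have ci : c i = 0 by have := c'0 i i3; rewrite /c' (negbTE ij) mul0r subr0.
by move=> l l3; have := c'0 l l3; rewrite /c' ci mulr0 subr0.
Qed.

Lemma qfree_neq x l m : qfree x -> (l < 3)%N -> (m < 3)%N -> l != m -> x l != x m.
Proof.
move=> fx l3 m3 lm; apply/eqP => xlm.
have : ((l == l)%:R - (l == m)%:R : rat) = 0.
  apply: (fx (fun n => (n == l)%:R - (n == m)%:R) _ l l3).
  by case: l m l3 m3 lm xlm => [|[|[|l]]] [|[|[|m]]] //= _ _ _ ->;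
    rewrite !(rmorphB, rmorph_nat); ring.
by rewrite eqxx (negbTE lm) subr0 => /eqP; rewrite oner_eq0.
Qed.

Lemma qfree_bary a b :
  (forall x y z : rat, ratr x + ratr y * a + ratr z * b = 0 -> [/\ x = 0, y = 0 & z = 0])
  <-> qfree (bary (a, b)).
Proof.
split=> [ind c E|fq x y z E].
  have [c0 c10 c20] : [/\ c 0%N = 0, c 1%N - c 0%N = 0 & c 2%N - c 0%N = 0].
    by apply: ind; rewrite -E /= !rmorphB; ring.
  by move: c10 c20; rewrite c0 !subr0 => c1 c2 [|[|[|l]]].
pose c (l : nat) := if l is 0 then x else if l is 1 then x + y else x + z.
have c0 : forall l, (l < 3)%N -> c l = 0 by apply: fq; rewrite -E /= !rmorphD; ring.
have := c0 0%N isT; have := c0 1%N isT; have := c0 2%N isT; rewrite /c => xz xy x0.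
by move: xy xz; rewrite x0 !add0r.
Qed.

End Simplex.

Section Eps.
Variables (R : realType) (e : 'I_3 -> R) (r : R).
Implicit Types pt : R * R.

Lemma eps_range pt i j : eps e r pt = (i, j) -> [/\ (i < 3)%N, (j < 3)%N & i != j].
Proof.
by case: pt => a b; rewrite /eps; case: ifP => _; [|case: ifP => _]; case: ifP => _ [<- <-].
Qed.

Lemma eps_le pt i j : eps e r pt = (i, j) -> bary pt j <= bary pt i.
Proof.
case: pt => a b; rewrite /eps /=.
by case: ifP => _; [|case: ifP => _]; case: ifP => [C|/negbT C]; rewrite -?ltNge in C;
  case=> <- <- /=; lra.
Qed.

Lemma eps_max pt i j : eps e r pt = (i, j) ->
  forall l m, (l < 3)%N -> (m < 3)%N -> l != m ->
  weight e r (bary pt l) * weight e r (bary pt m) <=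
  weight e r (bary pt i) * weight e r (bary pt j).
Proof.
case: pt => a b; rewrite /eps /= !vv_weight.
case: ifP => [/andP[h1 h2]|/negbT]; last rewrite negb_and -!ltNge => h.
  by case: ifP => _ [<- <-] [|[|[|l]]] [|[|[|m]]] //= _ _ _; lra.
case: ifP => [h'|/negbT h']; rewrite -?ltNge in h';
  by case: ifP => _ [<- <-] [|[|[|l]]] [|[|[|m]]] //= _ _ _; case/orP: h; lra.
Qed.

Lemma Tij_bary pt i j l : (i < 3)%N -> (j < 3)%N -> i != j -> 1 - bary pt j != 0 ->
  (l < 3)%N -> bary (Tij (i, j) pt) l = (bary pt l - (l == i)%:R * bary pt j) / (1 - bary pt j).
Proof.
case: pt => a b; case: i j l => [|[|[|i]]] [|[|[|j]]] [|[|[|l]]] //= _ _ _ d0 _;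
  rewrite ?mulr1n ?mulr0n ?mul1r ?mul0r ?subr0; field; move: d0; apply: contra_neq; lra.
Qed.

End Eps.

Section Dynamics.
Variables (R : realType) (K : set R) (e : 'I_3 -> R).
Hypothesis cf : cubic_field K e.
Variable r : R.
Implicit Types pt : R * R.

Lemma DeltaKE pt : DeltaK K pt.1 pt.2 <->
  [/\ forall l, (l < 3)%N -> K (bary pt l), forall l, (l < 3)%N -> 0 < bary pt l
    & qfree (bary pt)].
Proof.
case: pt => a b /=; split.
  case=> [[Ka Kb] /qfree_bary ind a0 b0 ab1]; split=> // [[|[|[|l]]]|[|[|[|l]]]] //= _;
    by [apply: (KB cf) => //; apply: (KB cf) => //; apply: (K1 cf) | lra].
case=> Kx pos /qfree_bary ind; split=> //; first by split; [apply: (Kx 1%N) | apply: (Kx 2%N)].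
- exact: (pos 1%N).
- exact: (pos 2%N).
- by have /= := pos 0%N isT; lra.
Qed.

Lemma Tmap_bary pt i j l : DeltaK K pt.1 pt.2 -> eps e r pt = (i, j) -> (l < 3)%N ->
  bary (Tmap e r pt) l = (bary pt l - (l == i)%:R * bary pt j) / (1 - bary pt j).
Proof.
move=> /DeltaKE[_ pos _] epsij l3; have [i3 j3 ij] := eps_range epsij.
by rewrite /Tmap epsij Tij_bary // subr_eq0 eq_sym lt_eqF // bary_lt1.
Qed.

Lemma Tmap_Delta pt : DeltaK K pt.1 pt.2 -> DeltaK K (Tmap e r pt).1 (Tmap e r pt).2.
Proof.
move=> Dpt; have /DeltaKE[Kx pos fx] := Dpt.
case epsij : (eps e r pt) => [i j]; have [i3 j3 ij] := eps_range epsij.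
have xji : bary pt j < bary pt i by rewrite lt_def (qfree_neq fx) ?(eps_le epsij).
have xj1 : 0 < 1 - bary pt j by rewrite subr_gt0 bary_lt1.
apply/DeltaKE; split=> [l l3|l l3|]; rewrite ?(Tmap_bary Dpt epsij) //.
- apply: (KM cf).
    by case: eqP => _; rewrite ?mul1r ?mul0r ?subr0; [apply: (KB cf) | ]; apply: Kx.
  by apply: (KV cf); [apply: (KB cf); [apply: (K1 cf) | apply: Kx] | rewrite gt_eqF].
- by rewrite divr_gt0 //; case: eqP => [->|_]; rewrite ?mul1r ?mul0r ?subr0 ?subr_gt0 // pos.
apply: (qfree_ext (x := fun l => (1 - bary pt j)^-1 * (bary pt l - (l == i)%:R * bary pt j))).
  by move=> l l3; rewrite (Tmap_bary Dpt epsij) // mulrC.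
by apply: qfreeZ; [rewrite invr_eq0 gt_eqF | apply: qfree_transvection].
Qed.

Lemma iter_Tmap_Delta a b n : DeltaK K a b ->
  DeltaK K (iter n (Tmap e r) (a, b)).1 (iter n (Tmap e r) (a, b)).2.
Proof. by move=> Dab; elim: n => //= n; apply: Tmap_Delta. Qed.

Lemma weight_Tmap pt i j : DeltaK K pt.1 pt.2 -> eps e r pt = (i, j) ->
  exists2 c, 0 < c & forall l, (l < 3)%N -> l != i ->
    weight e r (bary (Tmap e r pt) l) = weight e r (bary pt l) * c.
Proof.
move=> Dpt epsij; have /DeltaKE[Kx pos _] := Dpt; have [_ j3 _] := eps_range epsij.
have xj1 : 0 < 1 - bary pt j by rewrite subr_gt0 bary_lt1.
have Ks : K (1 - bary pt j)^-1.
  by apply: (KV cf); [apply: (KB cf); [apply: (K1 cf) | apply: Kx] | rewrite gt_eqF].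
exists (weight e r (1 - bary pt j)^-1); first by rewrite (weight_gt0 cf) ?invr_gt0.
move=> l l3 li; rewrite (Tmap_bary Dpt epsij) // (negbTE li) mul0r subr0.
by rewrite (weightM cf r (Kx l l3) Ks) ?invr_gt0 ?pos.
Qed.

End Dynamics.

Lemma third_index i j : (i < 3)%N -> (j < 3)%N -> i != j ->
  [/\ (3 - i - j < 3)%N, 3 - i - j != i & 3 - i - j != j]%N.
Proof. by case: i j => [|[|[|i]]] [|[|[|j]]]. Qed.

Section NoBacktrack.
Variables (R : realType) (K : set R) (e : 'I_3 -> R).
Hypothesis cf : cubic_field K e.
Variables p q : nat.
Hypotheses (p_gt0 : (0 < p)%N) (q_gt0 : (0 < q)%N) (p_not3 : ~~ (3 %| p)%N).
Local Notation r := (p%:R / q%:R : R).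
Local Notation weight := (weight e r).
Implicit Types pt : R * R.

Lemma weight_outside_top_lt pt i j k : DeltaK K pt.1 pt.2 ->
  eps e r pt = (i, j) \/ eps e r pt = (j, i) -> (k < 3)%N -> k != i -> k != j ->
  weight (bary pt k) < weight (bary pt j).
Proof.
move=> /(DeltaKE cf)[Kx pos fx] top k3 ki kj.
have [i3 j3] : (i < 3)%N /\ (j < 3)%N by case: top => /eps_range[? ? _]; split.
have wik : weight (bary pt i) * weight (bary pt k) <= weight (bary pt i) * weight (bary pt j).
  by case: top => /eps_max max; [|rewrite [X in _ <= X]mulrC]; apply: max; rewrite // eq_sym.
have wkj : weight (bary pt k) <= weight (bary pt j).
  by rewrite -(ler_pM2l (weight_gt0 cf r (Kx i i3) (pos i i3))).
rewrite lt_def wkj andbT; apply: contra_neq (qfree_neq fx j3 k3 _); last by rewrite eq_sym.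
exact: (weight_inj cf p_gt0 q_gt0 p_not3 (Kx j j3) (Kx k k3) (pos j j3) (pos k k3)).
Qed.

Lemma eps_Tmap_not_switch pt i j k : DeltaK K pt.1 pt.2 -> eps e r pt = (i, j) ->
  (k < 3)%N -> k != i -> k != j ->
  eps e r (Tmap e r pt) <> (i, k) /\ eps e r (Tmap e r pt) <> (k, i).
Proof.
move=> Dpt epsij k3 ki kj; have [i3 j3 ij] := eps_range epsij.
have wkj := weight_outside_top_lt Dpt (or_introl epsij) k3 ki kj.
suff no_top : ~ (eps e r (Tmap e r pt) = (i, k) \/ eps e r (Tmap e r pt) = (k, i)).
  by split=> top; apply: no_top; [left|right].
have [ji jk] : j != i /\ j != k by rewrite !(eq_sym j).
move=> /(weight_outside_top_lt (Tmap_Delta cf r Dpt)) /(_ j3 ji jk).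
have [c c0 wT] := weight_Tmap cf Dpt epsij.
by rewrite !wT // ltr_pM2r // ltNge (ltW wkj).
Qed.

End NoBacktrack.

Theorem theorem2p6 (R : realType) (K : set R) (e : 'I_3 -> R)
  (p q : nat) (alpha beta : R) (n : nat) :
  cubic_field K e ->
  (0 < p)%N -> (0 < q)%N -> coprime p q -> ~~ (3 %| p)%N ->
  DeltaK K alpha beta ->
  let r := (p%:R / q%:R : R) in
  let an := iter n (Tmap e r) (alpha, beta) in
  let i' := (eps e r an).1 in
  let j' := (eps e r an).2 in
  let k := (3 - i' - j')%N in
  eps e r (Tmap e r an) <> (i', k) /\ eps e r (Tmap e r an) <> (k, i').
Proof.
move=> cf p_gt0 q_gt0 _ p_not3 D r an i' j' k.
have epsij : eps e r an = (i', j') by rewrite /i' /j'; case: (eps e r an).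
have [i3 j3 ij] := eps_range epsij.
have [k3 ki kj] := third_index i3 j3 ij.
exact (eps_Tmap_not_switch cf p_gt0 q_gt0 p_not3 (iter_Tmap_Delta cf r n D) epsij k3 ki kj).
Qed.
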